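(* Let $(\Gamma,d)=(H,\iota,\sigma,m,d)$ be a $\mathbb{Z}/\overline m\mathbb{Z}$-graded Brauer graph and $H'\subseteq H$ stable under $\iota$. Let $\Gamma_d=(H_d,\iota_d,\sigma_d)$ be the Galois covering of $(\Gamma,d)$ and $H'_d=H'\times\mathbb{Z}/\overline m\mathbb{Z}\subseteq H_d$. Then the Galois covering of the graded Brauer graph $\mu^+_{H'}(\Gamma,d)$ is the Brauer graph $\mu^+_{H'_d}(\Gamma_d)$.
   Context: Brauer graph $\Gamma=(H,\iota,\sigma,m)$: $H$ finite, $\iota$ fixed-point-free involution, $\sigma$ a permutation, $m:H\to\mathbb{Z}_{>0}$ constant on $\sigma$-orbits; $\overline m=\mathrm{lcm}\{m(h)\}$. A grading $d:H\to\mathbb{Z}/\overline m\mathbb{Z}$ is admissible if for each $\sigma$-orbit $v$, $\sum_{h\in v}d(h)=\overline m/\widetilde m(v)$ with $\widetilde m(v)$ the value of $m$ on $v$; then $(\Gamma,d)$ is a graded Brauer graph. Its Galois covering is the Brauer graph (multiplicity identically $1$) $\Gamma_d$ with $H_d=H\times\mathbb{Z}/\overline m\mathbb{Z}$ (elements $h_i$), $\iota_d(h_i)=(\iota h)_i$, $\sigma_d(h_i)=(\sigma h)_{i+d(h)}$. Sectors: for $H'$ stable under $\iota$, $(h,r)\in H\times\mathbb{Z}_{\ge0}$ is a sector of elements of $H'$ if $r+1$ is the least $r'\ge0$ with $\sigma^{r'}h\notin H'$, maximal if also $\sigma^{-1}h\notin H'$. Ungraded move: $\mu^+_{(h,r)}(\Gamma)=(H,\iota,\sigma_{(h,r)},m_{(h,r)})$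 with $\sigma_{(h,r)}=(h\ \ \sigma^{r+1}h)\circ\sigma\circ(\sigma^rh\ \ \iota\sigma^{r+1}h)$ (applied right to left), $m_{(h,r)}(\sigma^ih)=m(\iota\sigma^{r+1}h)$ for $0\le i\le r$, $m_{(h,r)}=m$ otherwise. Graded move: $\mu^+_{(h,r)}(\Gamma,d)$ additionally carries $d_{(h,r)}$: $d_{(h,r)}(\iota\sigma^{r+1}h)=-\sum_{i=0}^rd(\sigma^ih)$; $d_{(h,r)}(\sigma^rh)=d(\iota\sigma^{r+1}h)+d(\sigma^rh)$ if $\iota\sigma^{r+1}h\neq\sigma^{-1}h$, else $\sum_{i=-1}^rd(\sigma^ih)+d(\sigma^rh)$; $d_{(h,r)}(\sigma^{-1}h)=\sum_{i=-1}^rd(\sigma^ih)$ if $\iota\sigma^{r+1}h\ne\sigma^{-1}h$, else $-\sum_{i=0}^rd(\sigma^ih)$; $d_{(h,r)}=d$ elsewhere; it is again admissible, with the same $\overline m$. The (graded) generalized Kauer move $\mu^+_{H'}$ is the succession of the (graded) moves of all maximal sectors of elements of $H'$ (independent of order). The Galois covering of $\mu^+_{H'}(\Gamma,d)=(H,\iota,\sigma_{H'},m_{H'},d_{H'})$ is formed with respect to $d_{H'}$. *)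

From HB Require Import structures.
From mathcomp Require Import all_boot all_order all_fingroup all_algebra.
Set Implicit Arguments. Unset Strict Implicit. Unset Printing Implicit Defensive.
Import GRing.Theory.
Local Open Scope ring_scope.

(* Z/nZ for n >= 1 (the only case used: n = mbar >= 1).
   'I_(n.-1).+1 carries the canonical additive group structure of Z/nZ. *)
Notation "''Zm' n" := ('I_(n.-1).+1) (at level 8, n at level 2, format "''Zm' n").

Section BrauerGraphs.
Variable H : finType.

Record bgraph := BG { bg_iota : {perm H}; bg_sigma : {perm H}; bg_mult : H -> nat }.

Definition is_bgraph (G : bgraph) : Prop :=
  [/\ (forall h, bg_iota G (bg_iota G h) = h),
      (forall h, bg_iota G h <> h),
      (forall h, (0 < bg_mult G h)%N) &
      (forall h, bg_mult G (bg_sigma G h) = bg_mult G h)].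

Definition mbar (m : H -> nat) : nat := \big[lcmn/1%N]_(h : H) m h.

Record gbgraph (n : nat) := GBG
  { gb_iota : {perm H}; gb_sigma : {perm H}; gb_mult : H -> nat; gb_deg : H -> 'Zm n }.

Definition underlying n (G : gbgraph n) : bgraph := BG (gb_iota G) (gb_sigma G) (gb_mult G).

Definition admissible n (G : gbgraph n) : Prop :=
  forall h : H, \sum_(x in porbit (gb_sigma G) h) gb_deg G x
                = inZp (n %/ gb_mult G h)%N :> 'Zm n.

Definition is_gbgraph n (G : gbgraph n) : Prop :=
  [/\ is_bgraph (underlying G), n = mbar (gb_mult G) & admissible G].

Definition spow (s : {perm H}) (i : nat) (h : H) : H := iter i (fun x => s x) h.

Definition is_sector (H' : {set H}) (s : {perm H}) (h : H) (r : nat) : bool :=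
  [forall i : 'I_r.+1, spow s i h \in H'] && (spow s r.+1 h \notin H').

Definition is_max_sector (H' : {set H}) (s : {perm H}) (h : H) (r : nat) : bool :=
  is_sector H' s h r && ((s^-1)%g h \notin H').

(* The list of all maximal sectors (a sector (h,r) always has r < #|H|),
   enumerated in the canonical order of the finType H. *)
Definition max_sectors (H' : {set H}) (s : {perm H}) : seq (H * nat) :=
  [seq p <- [seq (h, r) | h <- enum H, r <- iota 0 #|H|] | is_max_sector H' s p.1 p.2].

Definition move_sigma (io s : {perm H}) (h : H) (r : nat) : {perm H} :=
  (* (h  s^{r+1}h) o s o (s^r h  io s^{r+1} h), applied right to left;
     in mathcomp (p * q) x = q (p x) *)
  (tperm (spow s r h) (io (spow s r.+1 h)) * s * tperm h (spow s r.+1 h))%g.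

Definition move_mult (io s : {perm H}) (m : H -> nat) (h : H) (r : nat) : H -> nat :=
  fun x => if [exists i : 'I_r.+1, x == spow s i h] then m (io (spow s r.+1 h)) else m x.

Definition move (G : bgraph) (p : H * nat) : bgraph :=
  BG (bg_iota G) (move_sigma (bg_iota G) (bg_sigma G) p.1 p.2)
     (move_mult (bg_iota G) (bg_sigma G) (bg_mult G) p.1 p.2).

Definition move_deg n (io s : {perm H}) (d : H -> 'Zm n) (h : H) (r : nat) : H -> 'Zm n :=
  let S := \sum_(i < r.+1) d (spow s i h) in
  let a := spow s r h in
  let b := io (spow s r.+1 h) in
  let c := (s^-1)%g h in
  fun x =>
    if x == b then - S
    else if x == a then (if b != c then d b + d a else (d c + S) + d a)
    else if x == c then (if b != c then d c + S else - S)
    else d x.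

Definition gmove n (G : gbgraph n) (p : H * nat) : gbgraph n :=
  GBG (gb_iota G) (move_sigma (gb_iota G) (gb_sigma G) p.1 p.2)
      (move_mult (gb_iota G) (gb_sigma G) (gb_mult G) p.1 p.2)
      (move_deg (gb_iota G) (gb_sigma G) (gb_deg G) p.1 p.2).

(* generalized Kauer moves mu^+_{H'}: succession of the moves of all maximal
   sectors of elements of H' (sectors taken in the original graph). *)
Definition kauer (H' : {set H}) (G : bgraph) : bgraph :=
  foldl move G (max_sectors H' (bg_sigma G)).

Definition gkauer (H' : {set H}) n (G : gbgraph n) : gbgraph n :=
  foldl (@gmove n) G (max_sectors H' (gb_sigma G)).

End BrauerGraphs.

Section Covering.
Variables (H : finType) (n : nat).

Definition cov_iota_fun (io : {perm H}) (x : H * 'Zm n) : H * 'Zm n := (io x.1, x.2).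
Definition cov_sigma_fun (s : {perm H}) (d : H -> 'Zm n) (x : H * 'Zm n) : H * 'Zm n :=
  (s x.1, x.2 + d x.1).

Lemma cov_iota_inj io : injective (cov_iota_fun io).
Proof. by move=> [h i] [h' i'] [/perm_inj -> ->]. Qed.

Lemma cov_sigma_inj s d : injective (cov_sigma_fun s d).
Proof.
move=> [h i] [h' i'] E.
have /= /perm_inj eh := f_equal fst E; subst h'.
have /= /addIr -> := f_equal snd E; by [].
Qed.

Definition cov_iota io : {perm H * 'Zm n} := perm (@cov_iota_inj io).
Definition cov_sigma s d : {perm H * 'Zm n} := perm (@cov_sigma_inj s d).

Definition covering (G : gbgraph H n) : bgraph (H * 'Zm n)%type :=
  BG (cov_iota (gb_iota G)) (cov_sigma (gb_sigma G) (gb_deg G)) (fun _ => 1%N).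

Definition lift_set (H' : {set H}) : {set H * 'Zm n} := [set x | x.1 \in H'].

End Covering.

(* The covering permutation of a graded move at the sector (h, r) is the
   covering permutation of (Gamma, d) multiplied on the left and on the right
   by the lifts to all sheets of the transpositions (sigma^r h, iota sigma^(r+1) h)
   and (h, sigma^(r+1) h), the sheets being shifted by the partial degree sums
   along the sector; the new degrees are exactly what makes the sheets match.
   These lifted transpositions are the ungraded moves at the sectors
   ((h, i), r), i in Z/nZ, which are precisely the maximal sectors of
   H' x Z/nZ in the covering.  Distinct maximal sectors are disjoint, so
   successive moves do not interfere: on both sides the iterated moves multiply
   the original permutation by products of pairwise disjoint transpositions,
   and such a product depends only on the set of pairs. *)

From HB Require Import structures.
From mathcomp Require Import all_boot all_order all_fingroup all_algebra.
From mathcomp Require Import zify.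
From Stdlib Require Import FunctionalExtensionality.
Set Implicit Arguments. Unset Strict Implicit. Unset Printing Implicit Defensive.
Import GRing.Theory.

Section DisjointTranspositions.
Variable T : finType.
Implicit Types (p q : T * T) (ps : seq (T * T)) (x y : T).

Definition tprod ps : {perm T} := (\prod_(p <- ps) tperm p.1 p.2)%g.

Definition pair_disjoint p q := [&& p.1 != q.1, p.1 != q.2, p.2 != q.1 & p.2 != q.2].

Definition disjoint_pairs ps : Prop :=
  [/\ uniq ps, {in ps, forall p, p.1 != p.2}
    & {in ps &, forall p q, p != q -> pair_disjoint p q}].

Lemma tprod_cons p ps : tprod (p :: ps) = (tperm p.1 p.2 * tprod ps)%g.
Proof. exact: big_cons. Qed.

Lemma tprod_cat ps1 ps2 : tprod (ps1 ++ ps2) = (tprod ps1 * tprod ps2)%g.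
Proof. exact: big_cat. Qed.

Lemma tprod_id ps x : {in ps, forall p, (x != p.1) && (x != p.2)} -> tprod ps x = x.
Proof.
elim: ps => [|p ps IH] x_out; first by rewrite /tprod big_nil perm1.
have /andP[xp1 xp2] := x_out p (mem_head p ps).
rewrite tprod_cons permM tpermD 1?eq_sym //; apply: IH => q q_ps.
by apply: x_out; rewrite inE q_ps orbT.
Qed.

Lemma tprod_pair ps x y : disjoint_pairs ps -> (x, y) \in ps ->
  tprod ps x = y /\ tprod ps y = x.
Proof.
elim: ps => [|p ps IH] //= [/andP[p_ps U] N D].
have Dp q : q \in ps -> pair_disjoint p q.
  move=> q_ps; apply: D; rewrite ?mem_head ?inE ?q_ps ?orbT //.
  by apply: contraNneq p_ps => ->.
rewrite inE tprod_cons !permM => /predU1P[Ep | xy_ps].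
  subst p; rewrite tpermL tpermR.
  by split; apply: tprod_id => q /Dp /and4P[? ? ? ?]; apply/andP.
have := Dp _ xy_ps; rewrite /pair_disjoint /= => /and4P[? ? ? ?].
rewrite !tpermD //.
apply: IH xy_ps; split=> // [q q_ps | q q' q_ps q'_ps].
  by apply: N; rewrite inE q_ps orbT.
by apply: D; rewrite inE ?q_ps ?q'_ps orbT.
Qed.

Lemma perm_disjoint_pairs ps1 ps2 :
  perm_eq ps1 ps2 -> disjoint_pairs ps1 -> disjoint_pairs ps2.
Proof.
move=> eq12 [U N D]; split; first by rewrite -(perm_uniq eq12).
  by move=> p; rewrite -(perm_mem eq12); apply: N.
by move=> p q; rewrite -!(perm_mem eq12); apply: D.
Qed.

Lemma perm_tprod ps1 ps2 : disjoint_pairs ps1 -> perm_eq ps1 ps2 -> tprod ps1 = tprod ps2.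
Proof.
move=> D1 eq12; have D2 := perm_disjoint_pairs eq12 D1.
have mem12 := perm_mem eq12; apply/permP => x.
have [y xy | no_xy] := pickP (fun y => (x, y) \in ps1).
  have xy2 : (x, y) \in ps2 by rewrite -mem12.
  by have [-> _] := tprod_pair D1 xy; have [-> _] := tprod_pair D2 xy2.
have [y yx | no_yx] := pickP (fun y => (y, x) \in ps1).
  have yx2 : (y, x) \in ps2 by rewrite -mem12.
  by have [_ ->] := tprod_pair D1 yx; have [_ ->] := tprod_pair D2 yx2.
have x_out ps : ps =i ps1 -> {in ps, forall p, (x != p.1) && (x != p.2)}.
  move=> mem [a b]; rewrite mem => ab_ps /=.
  by apply/andP; split; apply: contraTneq ab_ps => <-; rewrite ?no_xy ?no_yx.
by rewrite !tprod_id //; apply: x_out => // p; rewrite mem12.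
Qed.

Lemma disjoint_pairs_map (I : eqType) (L : seq I) (f g : I -> T) :
  uniq L -> {in L &, injective f} -> {in L &, injective g} ->
  {in L &, forall i j, f i != g j} -> disjoint_pairs [seq (f i, g i) | i <- L].
Proof.
move=> UL f_inj g_inj fg; split.
- by rewrite map_inj_in_uniq // => i j Li Lj [/(f_inj i j Li Lj)].
- by move=> _ /mapP[i Li ->]; exact: fg.
move=> _ _ /mapP[i Li ->] /mapP[j Lj ->] ne.
have ij : i != j by apply: contraNneq ne => ->.
rewrite /pair_disjoint /= fg // (eq_sym (g i)) fg //.
by rewrite (contra_neq (f_inj _ _ Li Lj) ij) (contra_neq (g_inj _ _ Li Lj) ij).
Qed.

End DisjointTranspositions.

Section Sectors.
Variable T : finType.
Implicit Types (P : {set T}) (io s : {perm T}) (p : T * nat) (L : seq (T * nat)).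

Definition max_sector_seq P s L := uniq L && all (fun p => is_max_sector P s p.1 p.2) L.

Definition sector_tail io s p := (spow s p.2 p.1, io (spow s p.2.+1 p.1)).
Definition sector_head s p := (p.1, spow s p.2.+1 p.1).

Definition agree_on_sector (U : Type) s (f g : T -> U) p :=
  forall k, k <= p.2 -> f (spow s k p.1) = g (spow s k p.1).

Lemma max_sector_seq_cons P s p L :
  max_sector_seq P s (p :: L) =
  [&& p \notin L, is_max_sector P s p.1 p.2 & max_sector_seq P s L].
Proof. by rewrite /max_sector_seq /= -andbA (andbCA (uniq L)). Qed.

Lemma spowS s k x : spow s k.+1 x = s (spow s k x). Proof. by []. Qed.

Lemma spowD s i j x : spow s (i + j) x = spow s i (spow s j x).
Proof. exact: iterD. Qed.

Lemma spow_inj s k : injective (spow s k).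
Proof. by elim: k => [|k IH] x y //= /perm_inj; apply: IH. Qed.

Lemma agree_spow s s' p : agree_on_sector s s' s p ->
  forall k, k <= p.2.+1 -> spow s' k p.1 = spow s k p.1.
Proof. by move=> A; elim=> [|k IH] // kr; rewrite !spowS IH ?A // ltnW. Qed.

Section FixedSet.
Variables (P : {set T}) (s : {perm T}).

Lemma sector_in h r k : is_sector P s h r -> k <= r -> spow s k h \in P.
Proof. by case/andP=> /forallP in_P _ kr; exact: (in_P (Ordinal (kr : k < r.+1))). Qed.

Lemma sector_out h r : is_sector P s h r -> spow s r.+1 h \notin P.
Proof. by case/andP. Qed.

Lemma sector_spow_inj h r i j : is_sector P s h r -> i <= r.+1 -> j <= r.+1 ->
  spow s i h = spow s j h -> i = j.
Proof.
move=> S; wlog ij : i j / i <= j.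
  by move=> W ir jr E; case: (leqP i j) => [|/ltnW] ij; [|symmetry]; apply: W.
move=> ir jr E; case: (ltngtP i j) => [lt||//]; last lia.
have : spow s (r.+1 - j + i) h \in P by apply: (sector_in S); lia.
by rewrite spowD E -spowD subnK ?(negbTE (sector_out S)).
Qed.

Lemma sector_length_uniq h r r' : is_sector P s h r -> is_sector P s h r' -> r = r'.
Proof.
move=> S S'; case: (ltngtP r r') => // lt.
  by have := sector_in S' lt; rewrite (negbTE (sector_out S)).
by have := sector_in S lt; rewrite (negbTE (sector_out S')).
Qed.

Lemma sector_length_lt_card h r : is_sector P s h r -> r < #|T|.
Proof.
move=> S; have inj : injective (fun i : 'I_r.+2 => spow s i h).
  by move=> i j /(sector_spow_inj S) E; apply/val_inj/E; rewrite -ltnS ltn_ord.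
by have := leq_card _ inj; rewrite card_ord => /ltnW.
Qed.

Lemma mem_max_sectors p : (p \in max_sectors P s) = is_max_sector P s p.1 p.2.
Proof.
rewrite mem_filter; case: p => h r /=; case M: (is_max_sector P s h r) => //=.
apply: (allpairs_f (fun h r => (h, r))); first by rewrite mem_enum.
by rewrite mem_iota /= add0n; apply: (@sector_length_lt_card h); case/andP: M.
Qed.

Lemma max_sectors_uniq : uniq (max_sectors P s).
Proof.
apply/filter_uniq/allpairs_uniq; [exact: enum_uniq | exact: iota_uniq |].
by move=> [a b] [c d] _ _ /= [-> ->].
Qed.

Lemma max_sector_seq_max_sectors : max_sector_seq P s (max_sectors P s).
Proof. by rewrite /max_sector_seq max_sectors_uniq; apply/allP => p; rewrite mem_max_sectors. Qed.

(* A common point would make one sector extend the other backwards,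
   contradicting maximality. *)
Lemma max_sector_eq h r h' r' i j :
  is_max_sector P s h r -> is_max_sector P s h' r' ->
  i <= r -> j <= r' -> spow s i h = spow s j h' -> (h, r) = (h', r').
Proof.
wlog ij : h r h' r' i j / i <= j.
  move=> W M M' ir jr E; case: (leqP i j) => ij; first exact: W M M' ir jr E.
  by symmetry; apply: W M' M jr ir (esym E); apply: ltnW.
move=> /andP[S c] /andP[S' c'] ir jr E.
case: (ltngtP i j) ij => // [lt | eq_ij] _; last first.
  by subst j; have Eh := spow_inj E; subst h'; rewrite (sector_length_uniq S S').
have Eh : h = spow s (j - i) h'.
  by apply: (@spow_inj s i); rewrite -spowD subnKC // ltnW.
have : spow s (j - i).-1 h' \in P by apply: (sector_in S'); lia.
have -> : spow s (j - i).-1 h' = (s^-1)%g h.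
  by rewrite Eh -(prednK (_ : 0 < j - i)) ?subn_gt0 // spowS permK.
by rewrite (negbTE c).
Qed.

End FixedSet.
End Sectors.

Lemma move_sigma_id (T : finType) (io s : {perm T}) h r y :
  y != spow s r h -> y != io (spow s r.+1 h) -> s y != h ->
  move_sigma io s h r y = s y.
Proof.
move=> ya yb syh.
have esy : spow s r.+1 h != s y by rewrite spowS (inj_eq perm_inj) eq_sym.
by rewrite /move_sigma !permM !tpermD // eq_sym.
Qed.

Section KauerMoves.
Variables (T : finType) (P : {set T}) (io s : {perm T}).
Hypothesis io_stable : forall x, (io x \in P) = (x \in P).
Implicit Types (p : T * nat) (L : seq (T * nat)).

Lemma sector_points_avoid p L q k : max_sector_seq P s (p :: L) -> q \in L -> k <= q.2 ->
  let y := spow s k q.1 in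
  [/\ y != spow s p.2 p.1, y != io (spow s p.2.+1 p.1) & s y != p.1].
Proof.
rewrite max_sector_seq_cons => /and3P[pL Mp /andP[_ /allP A]] qL kq y.
have /andP[Sp cp] := Mp; have /andP[Sq _] := A q qL.
have yP : y \in P by apply: (sector_in Sq).
split.
- apply: contraNneq pL => /(max_sector_eq (A q qL) Mp kq (leqnn _)).
  by rewrite -!surjective_pairing => <-.
- by apply: contraTneq yP => ->; rewrite io_stable; exact: sector_out Sp.
- by apply: contraNneq cp => <-; rewrite permK.
Qed.

Lemma max_sector_seq_spow_inj L (k : T * nat -> nat) : max_sector_seq P s L ->
  (forall p, k p <= p.2) -> {in L &, injective (fun p => spow s (k p) p.1)}.
Proof.
case/andP=> _ /allP A k_le p q pL qL /= /(max_sector_eq (A p pL) (A q qL) (k_le p) (k_le q)).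
by rewrite -!surjective_pairing.
Qed.

Lemma disjoint_tails L : max_sector_seq P s L -> disjoint_pairs (map (sector_tail io s) L).
Proof.
move=> ML; have /andP[uniqL /allP maxL] := ML.
have inj := max_sector_seq_spow_inj (k := snd) ML (fun p => leqnn p.2).
apply: (disjoint_pairs_map uniqL) => [p q pL qL | p q pL qL | p q pL qL].
- exact: inj.
- by move/perm_inj/perm_inj; apply: inj.
have /andP[Sp _] := maxL p pL; have /andP[Sq _] := maxL q qL.
apply: contraTneq (sector_in Sp (leqnn _)) => ->.
by rewrite io_stable (sector_out Sq).
Qed.

Lemma disjoint_heads L : max_sector_seq P s L -> disjoint_pairs (map (sector_head s) L).
Proof.
move=> ML; have /andP[uniqL /allP maxL] := ML.
apply: (disjoint_pairs_map uniqL) => [p q pL qL | p q pL qL | p q pL qL].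
- exact: (max_sector_seq_spow_inj (k := fun _ => 0) ML (fun p => leq0n p.2) pL qL).
- by move/perm_inj/(max_sector_seq_spow_inj (k := snd) ML (fun p => leqnn p.2) pL qL).
have /andP[Sp _] := maxL p pL; have /andP[Sq _] := maxL q qL.
by apply: contraTneq (sector_in Sp (leq0n _)) => ->; rewrite (sector_out Sq).
Qed.

Lemma move_sigma_sector (s' : {perm T}) p : agree_on_sector s s' s p ->
  move_sigma io s' p.1 p.2 = (tprod [:: sector_tail io s p] * s' * tprod [:: sector_head s p])%g.
Proof. by move=> A; rewrite /tprod !big_seq1 /move_sigma !(agree_spow A). Qed.

Lemma move_sigma_agree (s' : {perm T}) p L : max_sector_seq P s (p :: L) ->
  agree_on_sector s s' s p -> {in L, forall q, agree_on_sector s s' s q} ->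
  {in L, forall q, agree_on_sector s (move_sigma io s' p.1 p.2) s q}.
Proof.
move=> ML Ap AL q qL k kq; have [ya yb syp] := sector_points_avoid ML qL kq.
rewrite -(agree_spow Ap) // in ya; rewrite -(agree_spow Ap) // in yb.
have s_agree := AL q qL k kq.
by rewrite move_sigma_id // s_agree.
Qed.

Lemma foldl_move_sigma L (G : bgraph T) : max_sector_seq P s L -> bg_iota G = io ->
  {in L, forall q, agree_on_sector s (bg_sigma G) s q} ->
  bg_sigma (foldl (@move T) G L) =
  (tprod (map (sector_tail io s) (rev L)) * bg_sigma G * tprod (map (sector_head s) L))%g.
Proof.
elim: L G => [|p L IH] G ML G_io AL /=; first by rewrite /tprod !big_nil mul1g mulg1.
have Ap := AL p (mem_head p L).
have ML' : max_sector_seq P s L by rewrite max_sector_seq_cons in ML; case/and3P: ML.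
rewrite IH //= G_io; last first.
  by apply: move_sigma_agree ML Ap _ => q qL; apply: AL; rewrite inE qL orbT.
rewrite move_sigma_sector // rev_cons -cats1 map_cat tprod_cat.
by rewrite /= /tprod !big_seq1 big_cons !mulgA.
Qed.

End KauerMoves.

Lemma kauer_sigma (T : finType) (P : {set T}) (G : bgraph T) :
  (forall x, (bg_iota G x \in P) = (x \in P)) ->
  bg_sigma (kauer P G) =
  (tprod (map (sector_tail (bg_iota G) (bg_sigma G)) (rev (max_sectors P (bg_sigma G))))
   * bg_sigma G * tprod (map (sector_head (bg_sigma G)) (max_sectors P (bg_sigma G))))%g.
Proof.
move=> io_stable; apply: foldl_move_sigma => //.
exact: max_sector_seq_max_sectors.
Qed.

Lemma foldl_move_iota (T : finType) L (G : bgraph T) :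
  bg_iota (foldl (@move T) G L) = bg_iota G.
Proof. by elim: L G => [|p L IH] G //=; rewrite IH. Qed.

Lemma foldl_move_mult_one (T : finType) L (G : bgraph T) :
  bg_mult G =1 (fun=> 1%N) -> bg_mult (foldl (@move T) G L) =1 (fun=> 1%N).
Proof.
elim: L G => [|p L IH] G G1 //=; apply: IH => x /=.
by rewrite /move_mult; case: ifP; rewrite G1.
Qed.

Lemma foldl_gmove_iota (T : finType) n L (G : gbgraph T n) :
  gb_iota (foldl (@gmove T n) G L) = gb_iota G.
Proof. by elim: L G => [|p L IH] G //=; rewrite IH. Qed.

Section Covering.
Variables (H : finType) (n : nat).
Local Open Scope ring_scope.
Implicit Types (P : {set H}) (io s : {perm H}) (d : H -> 'Zm n) (p : H * nat).

Definition path_deg s d h k : 'Zm n := \sum_(j < k) d (spow s j h).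

Lemma cov_sigmaE s d x : cov_sigma s d x = (s x.1, x.2 + d x.1).
Proof. by rewrite permE. Qed.

Lemma cov_iotaE io x : cov_iota n io x = (io x.1, x.2).
Proof. by rewrite permE. Qed.

Lemma cov_spow s d k h i : spow (cov_sigma s d) k (h, i) = (spow s k h, i + path_deg s d h k).
Proof.
elim: k => [|k IH]; first by rewrite /path_deg big_ord0 addr0.
by rewrite spowS IH cov_sigmaE /path_deg big_ord_recr /= addrA.
Qed.

Lemma cov_sigmaV_fst s d x : (((cov_sigma s d)^-1)%g x).1 = (s^-1)%g x.1.
Proof. by rewrite -{2}[x](permKV (cov_sigma s d)) cov_sigmaE permK. Qed.

Lemma lift_set_stable P io : (forall h, (io h \in P) = (h \in P)) ->
  forall x, (cov_iota n io x \in lift_set n P) = (x \in lift_set n P).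
Proof. by move=> io_stable x; rewrite cov_iotaE !inE io_stable. Qed.

Lemma is_max_sector_lift P s d h i r :
  is_max_sector (lift_set n P) (cov_sigma s d) (h, i) r = is_max_sector P s h r.
Proof.
rewrite /is_max_sector /is_sector cov_spow !inE cov_sigmaV_fst /=.
by congr (_ && _ && _); apply: eq_forallb => k; rewrite cov_spow inE.
Qed.

Definition lift_sectors (L : seq (H * nat)) : seq ((H * 'Zm n) * nat) :=
  [seq ((p.1, i), p.2) | p <- L, i <- enum 'Zm n].

Lemma lift_sectors_cat L1 L2 : lift_sectors (L1 ++ L2) = lift_sectors L1 ++ lift_sectors L2.
Proof. by rewrite /lift_sectors map_cat flatten_cat. Qed.

Lemma perm_lift_max_sectors P s d :
  perm_eq (lift_sectors (max_sectors P s)) (max_sectors (lift_set n P) (cov_sigma s d)).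
Proof.
apply: uniq_perm; rewrite ?max_sectors_uniq //.
  apply: allpairs_uniq; rewrite ?enum_uniq ?max_sectors_uniq //.
  by move=> -[[h r] i] [[h' r'] j] _ _ /= [-> -> ->].
move=> [[h i] r]; rewrite mem_max_sectors /= is_max_sector_lift.
rewrite -(mem_max_sectors P s (h, r)).
apply/allpairsP/idP => [[[[h' r'] i'] [/= L' _ [Eh Ei Er]]] | hrL]; first by subst.
by exists ((h, r), i); rewrite mem_enum.
Qed.

Lemma cover_sector_tail io s d h i r :
  sector_tail (cov_iota n io) (cov_sigma s d) ((h, i), r) =
  ((spow s r h, i + path_deg s d h r), (io (spow s r.+1 h), i + path_deg s d h r.+1)).
Proof. by rewrite /sector_tail !cov_spow cov_iotaE. Qed.

Lemma cover_sector_head s d h i r :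
  sector_head (cov_sigma s d) ((h, i), r) = ((h, i), (spow s r.+1 h, i + path_deg s d h r.+1)).
Proof. by rewrite /sector_head cov_spow. Qed.

Definition shifted_pairs (x y : H) (c c' : 'Zm n) : seq ((H * 'Zm n) * (H * 'Zm n)) :=
  [seq ((x, i + c), (y, i + c')) | i <- enum 'Zm n].

Lemma disjoint_shifted_pairs x y c c' : x != y -> disjoint_pairs (shifted_pairs x y c c').
Proof.
move=> xy; apply: disjoint_pairs_map; rewrite ?enum_uniq // => i j _ _.
- by move/(congr1 snd)/addIr.
- by move/(congr1 snd)/addIr.
- by rewrite xpair_eqE (negbTE xy).
Qed.

Lemma tprod_shifted_pairsL x y c c' j : x != y ->
  tprod (shifted_pairs x y c c') (x, j) = (y, j - c + c').
Proof.
move=> xy; rewrite -{1}(subrK c j).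
by have [-> _] := tprod_pair (disjoint_shifted_pairs c c' xy) (map_f _ (mem_enum _ (j - c))).
Qed.

Lemma tprod_shifted_pairsR x y c c' j : x != y ->
  tprod (shifted_pairs x y c c') (y, j) = (x, j - c' + c).
Proof.
move=> xy; rewrite -{1}(subrK c' j).
by have [_ ->] := tprod_pair (disjoint_shifted_pairs c c' xy) (map_f _ (mem_enum _ (j - c'))).
Qed.

Lemma tprod_shifted_pairs_id x y c c' z : z.1 != x -> z.1 != y ->
  tprod (shifted_pairs x y c c') z = z.
Proof.
move=> zx zy; apply: tprod_id => _ /mapP[i _ ->].
by apply/andP; split; [apply: contra_neq zx | apply: contra_neq zy] => ->.
Qed.

Lemma cov_sigma_move io s d h r :
  spow s r h != io (spow s r.+1 h) -> h != spow s r.+1 h ->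
  cov_sigma (move_sigma io s h r) (move_deg io s d h r) =
  (tprod (shifted_pairs (spow s r h) (io (spow s r.+1 h)) (path_deg s d h r) (path_deg s d h r.+1))
   * cov_sigma s d * tprod (shifted_pairs h (spow s r.+1 h) 0 (path_deg s d h r.+1)))%g.
Proof.
set a := spow s r h; set e := spow s r.+1 h; set b := io e.
set D := path_deg s d h r; set S := path_deg s d h r.+1 => ab he.
have SD : S = D + d a by rewrite /S /path_deg big_ord_recr.
have ea : e = s a by [].
apply/permP => -[x j]; rewrite !permM !cov_sigmaE /= /move_sigma /move_deg !permM -/a -/e -/b.
change (\sum_(i < r.+1) d (spow s i h)) with S.
case: (eqVneq x b) => [-> | xb].
  rewrite tpermR -ea tpermR tprod_shifted_pairsR //= -ea.
  by rewrite -[j - S + D + d a]addrA -SD subrK tprod_shifted_pairsR // addr0.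
case: (eqVneq x a) => [-> | xa].
  rewrite tpermL tprod_shifted_pairsL //=.
  have -> : j - D + S = j + d a by rewrite SD addrA subrK.
  case: (eqVneq b (s^-1 h)%g) => [Ebc | Nbc].
    have sb : s b = h by rewrite Ebc permKV.
    rewrite /= sb tpermL tprod_shifted_pairsL // subr0.
    by rewrite -Ebc [d b + S + d a]addrC !addrA.
  have sbh : s b != h by apply: contraNneq Nbc => <-; rewrite permK.
  have sbe : s b != e by rewrite ea (inj_eq perm_inj) eq_sym.
  rewrite /= tpermD 1?eq_sym // tprod_shifted_pairs_id //.
  by rewrite addrA addrAC.
have [ax bx] : a != x /\ b != x by rewrite !(eq_sym _ x).
rewrite (tpermD ax bx) (@tprod_shifted_pairs_id a b D S (x, j)) //=.
case: (eqVneq x (s^-1 h)%g) => [Exc | Nxc].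
  have sx : s x = h by rewrite Exc permKV.
  by rewrite sx tpermL -Exc bx /= tprod_shifted_pairsL // subr0 addrA.
have sxh : s x != h by apply: contraNneq Nxc => <-; rewrite permK.
have sxe : s x != e by rewrite ea (inj_eq perm_inj).
by rewrite tpermD 1?eq_sym // tprod_shifted_pairs_id //=.
Qed.

End Covering.

Lemma move_deg_id (H : finType) n (io s : {perm H}) (d : H -> 'Zm n) h r y :
  y != spow s r h -> y != io (spow s r.+1 h) -> s y != h ->
  move_deg io s d h r y = d y.
Proof.
move=> ya yb syh; have yc : y != (s^-1)%g h by apply: contra syh => /eqP ->; rewrite permKV.
by rewrite /move_deg (negbTE ya) (negbTE yb) (negbTE yc).
Qed.

Section GradedMoves.
Variables (H : finType) (n : nat) (P : {set H}) (io s : {perm H}) (d : H -> 'Zm n).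
Hypothesis io_stable : forall h, (io h \in P) = (h \in P).
Implicit Types (p : H * nat) (L : seq (H * nat)).

Local Notation tail_c := (sector_tail (cov_iota n io) (cov_sigma s d)).
Local Notation head_c := (sector_head (cov_sigma s d)).

Lemma move_deg_agree (s' : {perm H}) (d' : H -> 'Zm n) p L :
  max_sector_seq P s (p :: L) -> agree_on_sector s s' s p ->
  {in L, forall q, agree_on_sector s s' s q} -> {in L, forall q, agree_on_sector s d' d q} ->
  {in L, forall q, agree_on_sector s (move_deg io s' d' p.1 p.2) d q}.
Proof.
move=> ML Ap AL DL q qL k kq; have [ya yb syp] := sector_points_avoid io_stable ML qL kq.
rewrite -(agree_spow Ap) // in ya; rewrite -(agree_spow Ap) // in yb.
have s_agree := AL q qL k kq.
by rewrite move_deg_id ?s_agree // (DL q qL k kq).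
Qed.

Lemma path_deg_agree (s' : {perm H}) (d' : H -> 'Zm n) p k :
  agree_on_sector s s' s p -> agree_on_sector s d' d p -> k <= p.2.+1 ->
  path_deg s' d' p.1 k = path_deg s d p.1 k.
Proof.
move=> Ap Dp kp; apply: eq_bigr => j _; have jp : j <= p.2 by have := ltn_ord j; lia.
by rewrite (agree_spow Ap) ?Dp // ltnW.
Qed.

Lemma lift_sector_tails p :
  map tail_c (lift_sectors n [:: p]) =
  shifted_pairs (spow s p.2 p.1) (io (spow s p.2.+1 p.1))
                (path_deg s d p.1 p.2) (path_deg s d p.1 p.2.+1).
Proof.
rewrite /lift_sectors /= cats0 -map_comp; apply: eq_map => i.
exact: cover_sector_tail.
Qed.

Lemma lift_sector_heads p :
  map head_c (lift_sectors n [:: p]) =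
  shifted_pairs p.1 (spow s p.2.+1 p.1) 0%R (path_deg s d p.1 p.2.+1).
Proof.
rewrite /lift_sectors /= cats0 -map_comp; apply: eq_map => i /=.
by rewrite cover_sector_head addr0.
Qed.

Lemma gmove_cover_sigma p (G : gbgraph H n) :
  is_max_sector P s p.1 p.2 -> gb_iota G = io ->
  agree_on_sector s (gb_sigma G) s p -> agree_on_sector s (gb_deg G) d p ->
  bg_sigma (covering (gmove G p)) =
  (tprod (map tail_c (lift_sectors n [:: p])) * bg_sigma (covering G)
   * tprod (map head_c (lift_sectors n [:: p])))%g.
Proof.
move=> /andP[Sp _] G_io Ap Dp; rewrite /= G_io cov_sigma_move.
- by rewrite !(agree_spow Ap) // !(path_deg_agree Ap Dp) // lift_sector_tails lift_sector_heads.
- rewrite !(agree_spow Ap) //; apply: contraTneq (sector_in Sp (leqnn _)) => ->.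
  by rewrite io_stable (sector_out Sp).
- rewrite (agree_spow Ap) //; apply: contraTneq (sector_in Sp (leq0n _)) => ->.
  exact: sector_out Sp.
Qed.

Lemma foldl_gmove_cover_sigma L (G : gbgraph H n) :
  max_sector_seq P s L -> gb_iota G = io ->
  {in L, forall q, agree_on_sector s (gb_sigma G) s q} ->
  {in L, forall q, agree_on_sector s (gb_deg G) d q} ->
  bg_sigma (covering (foldl (@gmove H n) G L)) =
  (tprod (map tail_c (lift_sectors n (rev L))) * bg_sigma (covering G)
   * tprod (map head_c (lift_sectors n L)))%g.
Proof.
elim: L G => [|p L IH] G ML G_io AL DL; first by rewrite /tprod /= !big_nil mul1g mulg1.
have Ap := AL p (mem_head p L); have Dp := DL p (mem_head p L).
have /and3P[_ Mp ML'] : [&& p \notin L, is_max_sector P s p.1 p.2 & max_sector_seq P s L].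
  by rewrite -max_sector_seq_cons.
have AL' : {in L, forall q, agree_on_sector s (gb_sigma G) s q}.
  by move=> q qL; apply: AL; rewrite inE qL orbT.
have DL' : {in L, forall q, agree_on_sector s (gb_deg G) d q}.
  by move=> q qL; apply: DL; rewrite inE qL orbT.
rewrite [foldl _ _ _]/= IH //; last 2 first.
- by rewrite /= G_io; exact: move_sigma_agree.
- by rewrite /= G_io; exact: move_deg_agree.
rewrite gmove_cover_sigma // rev_cons -cats1 lift_sectors_cat (lift_sectors_cat n [:: p] L).
by rewrite !map_cat !tprod_cat !mulgA.
Qed.

End GradedMoves.

Section KauerOnCovering.
Variables (H : finType) (n : nat) (P : {set H}) (G : gbgraph H n).
Hypothesis io_stable : forall h, (gb_iota G h \in P) = (h \in P).

Local Notation L := (max_sectors P (gb_sigma G)).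
Local Notation tail_c := (sector_tail (cov_iota n (gb_iota G)) (bg_sigma (covering G))).
Local Notation head_c := (sector_head (bg_sigma (covering G))).

Lemma gkauer_cover_sigma :
  bg_sigma (covering (gkauer P G)) =
  (tprod (map tail_c (lift_sectors n (rev L))) * bg_sigma (covering G)
   * tprod (map head_c (lift_sectors n L)))%g.
Proof. by apply: foldl_gmove_cover_sigma => //; apply: max_sector_seq_max_sectors. Qed.

Lemma kauer_cover_sigma :
  bg_sigma (kauer (lift_set n P) (covering G)) =
  (tprod (map tail_c (lift_sectors n (rev L))) * bg_sigma (covering G)
   * tprod (map head_c (lift_sectors n L)))%g.
Proof.
have cover_stable := lift_set_stable (n := n) io_stable.
pose Lc := max_sectors (lift_set n P) (bg_sigma (covering G)).
have perm_Lc : perm_eq Lc (lift_sectors n L).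
  rewrite perm_sym; exact: perm_lift_max_sectors.
have perm_rev_Lc : perm_eq (rev Lc) (lift_sectors n (rev L)).
  rewrite perm_rev; apply: perm_trans perm_Lc _.
  by apply: perm_allpairs => //; rewrite perm_sym perm_rev.
have seq_Lc : max_sector_seq (lift_set n P) (bg_sigma (covering G)) Lc.
  exact: max_sector_seq_max_sectors.
have seq_rev_Lc : max_sector_seq (lift_set n P) (bg_sigma (covering G)) (rev Lc).
  by rewrite /max_sector_seq rev_uniq all_rev.
rewrite kauer_sigma; last exact: cover_stable.
rewrite (perm_tprod (disjoint_tails cover_stable seq_rev_Lc) (perm_map _ perm_rev_Lc)).
by rewrite (perm_tprod (disjoint_heads seq_Lc) (perm_map _ perm_Lc)).
Qed.

End KauerOnCovering.

Lemma bgraph_eq (T : finType) (G1 G2 : bgraph T) : bg_iota G1 = bg_iota G2 ->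
  bg_sigma G1 = bg_sigma G2 -> bg_mult G1 =1 bg_mult G2 -> G1 = G2.
Proof.
by case: G1 G2 => [i1 s1 m1] [i2 s2 m2] /= -> -> /functional_extensionality ->.
Qed.

Unset Implicit Arguments.
Theorem proposition2p19 (H : finType) (n : nat) (G : gbgraph H n) (H' : {set H}) :
  is_gbgraph G ->
  (forall h : H, (gb_iota G h \in H') = (h \in H')) ->
  covering (gkauer H' G) = kauer (lift_set n H') (covering G).
Proof.
move=> _ io_stable; apply: bgraph_eq.
- by rewrite foldl_move_iota /= foldl_gmove_iota.
- by rewrite kauer_cover_sigma // gkauer_cover_sigma.
- by move=> x; rewrite /kauer foldl_move_mult_one.
Qed.
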